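(* Work in a second-order (Bayes linear) belief framework with prevision $P(\cdot)$ and $\mathrm{Var}$, $\mathrm{Cov}$ derived from it, and for random vectors $Y,W$ let $P_W(Y)=P(Y)+\mathrm{Cov}(Y,W)\mathrm{Var}(W)^{\dagger}(W-P(W))$ be the adjusted expectation ($\dagger$ = Moore–Penrose inverse). Let $Z_{ij}=\mu_i+\mathcal R_{ij}$ ($i=1,\dots,m$, $j=1,\dots,n_i$) be random vectors where each $\mathcal R_{ij}$ has $P(\mathcal R_{ij})=0$, is uncorrelated with every $\mu_k$, distinct residuals are mutually uncorrelated, and $\mathrm{Var}(\mathcal R_{ij})$ does not depend on $j$. Let $\boldsymbol\mu=\mathrm{vec}(\mu_1,\dots,\mu_m)$ and suppose the quantity of interest satisfies $X=\boldsymbol{\mathcal A}\boldsymbol\mu+\boldsymbol U$, with $\boldsymbol{\mathcal A}$ a known matrix and $\boldsymbol U$ uncorrelated with all $\mu_i$ and $\mathcal R_{ij}$. Let $\overline Z_i=\frac1{n_i}\sum_{j=1}^{n_i}Z_{ij}$, $\overline{\boldsymbol Z}=(\overline Z_1,\dots,\overline Z_m)$ and $\mathcal Z=P_{\overline{\boldsymbol Z}}(\boldsymbol\mu)$. Then $P_{\mathcal Z}(X)\to\boldsymbol{\mathcal A}\boldsymbol\mu+P(\boldsymbol U)$ as $n_i\to\infty$ for all $i$.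
   Context: Convergence is in the second-order (Bayes linear) sense, i.e. in the norm $\|Y\|^2=P(Y^\intercal Y)$; in particular $\overline Z_i\to\mu_i$ in this sense as $n_i\to\infty$. *)

From HB Require Import structures.
From mathcomp Require Import all_boot all_order all_algebra.
From mathcomp Require Import boolp classical_sets reals.
Set Implicit Arguments. Unset Strict Implicit. Unset Printing Implicit Defensive.
Import Order.TTheory GRing.Theory Num.Theory.
Local Open Scope ring_scope.

(* A second-order (Bayes linear) belief structure: random quantities form a
   real vector space V containing the constant 1 ("bl_one"), and
   pe X Y = P(XY) is the prevision of products, a symmetric positive
   semidefinite bilinear form with P(1*1) = 1. *)
Record belief (R : realType) (V : lmodType R) := Belief {
  pe : V -> V -> R;
  bl_one : V;
  pe_linear : forall (a : R) (x y z : V), pe (a *: x + y) z = a * pe x z + pe y z;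
  pe_sym : forall x y, pe x y = pe y x;
  pe_ge0 : forall x, 0 <= pe x x;
  pe_unit : pe bl_one bl_one = 1 }.

Section BayesLinear.
Variables (R : realType) (V : lmodType R) (B : belief V).

Definition bl_prev (x : V) : R := pe B x (bl_one B).
Definition bl_cov (x y : V) : R := pe B x y - bl_prev x * bl_prev y.

Definition covm k l (Y : 'I_k -> V) (W : 'I_l -> V) : 'M[R]_(k, l) :=
  \matrix_(i, j) bl_cov (Y i) (W j).
Definition varm k (W : 'I_k -> V) : 'M[R]_k := covm W W.

Definition is_mpinv k l (M : 'M[R]_(k, l)) (N : 'M[R]_(l, k)) : Prop :=
  [/\ M *m N *m M = M, N *m M *m N = N,
      (M *m N)^T = M *m N & (N *m M)^T = N *m M].
Definition mpinv k l (M : 'M[R]_(k, l)) : 'M[R]_(l, k) :=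
  xget 0 [set N | is_mpinv M N].

Definition adj_exp k l (W : 'I_l -> V) (Y : 'I_k -> V) : 'I_k -> V :=
  fun i => bl_prev (Y i) *: bl_one B +
    \sum_(j < l) (covm Y W *m mpinv (varm W)) i j *: (W j - bl_prev (W j) *: bl_one B).

Definition bl_norm k (Y : 'I_k -> V) : R := Num.sqrt (\sum_(i < k) pe B (Y i) (Y i)).

End BayesLinear.

(* The adjusted expectation P_W(Y) is the orthogonal projection of Y, for the
   inner product (x, y) |-> P(xy), onto the span of 1 and the components of W;
   it therefore minimises P((Y - x)^2) over that span.  Since calZ_k lies in the
   span of calZ, and calZ_k = P_Zbar(mu_k) is at least as good a predictor of
   mu_k as Zbar_k, the error of P_calZ(mu_k) is at most that of Zbar_k, namely
   Var(R_{g k, 1}) / n_{g k}.  As U is uncorrelated with calZ, P_calZ(X) =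
   A P_calZ(mu) + P(U), so the error for X is a fixed linear image of these
   errors and is O(1 / min_i n_i). *)

From HB Require Import structures.
From mathcomp Require Import all_boot all_order all_algebra.
From mathcomp Require Import boolp classical_sets reals.
From mathcomp Require Import ring lra.
Import Order.TTheory GRing.Theory Num.Theory.
Set Implicit Arguments. Unset Strict Implicit. Unset Printing Implicit Defensive.
Local Open Scope ring_scope.

Section MoorePenrose.
Variable R : realType.

Lemma row_free_gram_unit r n (G : 'M[R]_(r, n)) : row_free G -> G *m G^T \in unitmx.
Proof.
move=> freeG; rewrite -row_free_unit; apply: inj_row_free => v vGG0.
have vG0 : v *m G = 0.
  apply/rowP => j; rewrite [RHS]mxE.
  have : ((v *m G) *m (v *m G)^T) 0 0 = 0.
    by rewrite trmx_mul mulmxA -(mulmxA v) vGG0 mul0mx mxE.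
  rewrite mxE => /psumr_eq0P sq0.
  have sq_ge0 i : true -> 0 <= (v *m G) 0 i * (v *m G)^T i 0.
    by rewrite [_^T _ _]mxE -expr2 sqr_ge0.
  by have /eqP := sq0 sq_ge0 j isT; rewrite [_^T _ _]mxE mulf_eq0 orbb => /eqP.
by apply: (row_free_inj freeG); rewrite vG0 mul0mx.
Qed.

Lemma is_mpinv_full_rank k l r (F : 'M[R]_(k, r)) (G : 'M[R]_(r, l)) :
  F^T *m F \in unitmx -> G *m G^T \in unitmx ->
  is_mpinv (F *m G) (G^T *m invmx (G *m G^T) *m invmx (F^T *m F) *m F^T).
Proof.
move=> unitF unitG.
set P := invmx (F^T *m F); set Q := invmx (G *m G^T).
have PF : P *m (F^T *m F) = 1%:M by rewrite mulVmx.
have GQ : (G *m G^T) *m Q = 1%:M by rewrite mulmxV.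
have QG : Q *m (G *m G^T) = 1%:M by rewrite mulVmx.
have PT : P^T = P by rewrite /P trmx_inv trmx_mul trmxK.
have QT : Q^T = Q by rewrite /Q trmx_inv trmx_mul trmxK.
have MN : (F *m G) *m (G^T *m Q *m P *m F^T) = F *m P *m F^T.
  by rewrite !mulmxA -(mulmxA F G) -(mulmxA F _ Q) GQ mulmx1.
have NM : (G^T *m Q *m P *m F^T) *m (F *m G) = G^T *m Q *m G.
  by rewrite !mulmxA -(mulmxA _ F^T F) -(mulmxA _ P) PF mulmx1.
split.
- by rewrite MN !mulmxA -(mulmxA _ F^T F) -(mulmxA F P) PF mulmx1.
- rewrite NM !mulmxA -(mulmxA _ G G^T) -(mulmxA _ Q) -(mulmxA G^T Q) QG mulmx1.
  by rewrite !mulmxA.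
- by rewrite MN !trmx_mul trmxK PT mulmxA.
- by rewrite NM !trmx_mul trmxK QT mulmxA.
Qed.

Lemma mpinv_exists k l (M : 'M[R]_(k, l)) : exists N, is_mpinv M N.
Proof.
have freeF : row_free (col_base M)^T by rewrite /row_free mxrank_tr; exact: col_base_full.
have unitF : (col_base M)^T *m col_base M \in unitmx.
  by have := row_free_gram_unit freeF; rewrite trmxK.
rewrite -{1}(mulmx_base M); eexists.
exact: is_mpinv_full_rank unitF (row_free_gram_unit (row_base_free M)).
Qed.

Lemma mpinvP k l (M : 'M[R]_(k, l)) : is_mpinv M (mpinv M).
Proof. by apply: (@xgetPex _ 0 [set N | is_mpinv M N]); exact: mpinv_exists. Qed.

End MoorePenrose.

Section LinearFunctional.
Variables (R : realType) (V : lmodType R) (f : V -> R).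
Hypothesis f_linear : forall a x y, f (a *: x + y) = a * f x + f y.

Lemma lf0 : f 0 = 0.
Proof. by have := f_linear 1 0 0; rewrite scaler0 addr0 mul1r => h; lra. Qed.
Lemma lfD x y : f (x + y) = f x + f y.
Proof. by rewrite -[x]scale1r f_linear mul1r scale1r. Qed.
Lemma lfZ a x : f (a *: x) = a * f x.
Proof. by rewrite -[a *: x]addr0 f_linear lf0 addr0. Qed.
Lemma lfN x : f (- x) = - f x.
Proof. by rewrite -scaleN1r lfZ mulN1r. Qed.
Lemma lfB x y : f (x - y) = f x - f y.
Proof. by rewrite lfD lfN. Qed.
End LinearFunctional.

Section BeliefCalculus.
Context {R : realType} {V : lmodType R} (B : belief V).
Local Notation pe := (pe B).
Local Notation one := (bl_one B).
Local Notation prev := (bl_prev B).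
Local Notation cov := (bl_cov B).

Let pe_linearl z a x y : pe (a *: x + y) z = a * pe x z + pe y z.
Proof. exact: pe_linear. Qed.
Let pe_linearr z a x y : pe z (a *: x + y) = a * pe z x + pe z y.
Proof. by rewrite pe_sym pe_linear !(pe_sym _ z). Qed.
Let pe0l z : pe 0 z = 0. Proof. exact: lf0 (pe_linearl z). Qed.
Let pe0r z : pe z 0 = 0. Proof. exact: lf0 (pe_linearr z). Qed.

Lemma peDl x y z : pe (x + y) z = pe x z + pe y z. Proof. exact: lfD (pe_linearl z) _ _. Qed.
Lemma peDr x y z : pe z (x + y) = pe z x + pe z y. Proof. exact: lfD (pe_linearr z) _ _. Qed.
Lemma peBl x y z : pe (x - y) z = pe x z - pe y z. Proof. exact: lfB (pe_linearl z) _ _. Qed.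
Lemma peBr x y z : pe z (x - y) = pe z x - pe z y. Proof. exact: lfB (pe_linearr z) _ _. Qed.
Lemma peNl x z : pe (- x) z = - pe x z. Proof. exact: lfN (pe_linearl z) _. Qed.
Lemma peNr x z : pe z (- x) = - pe z x. Proof. exact: lfN (pe_linearr z) _. Qed.
Lemma peZl a x z : pe (a *: x) z = a * pe x z. Proof. exact: lfZ (pe_linearl z) _ _. Qed.
Lemma peZr a x z : pe z (a *: x) = a * pe z x. Proof. exact: lfZ (pe_linearr z) _ _. Qed.
Lemma pe_suml I (r : seq I) (P : pred I) (F : I -> V) z :
  pe (\sum_(i <- r | P i) F i) z = \sum_(i <- r | P i) pe (F i) z.
Proof. by rewrite (big_morph _ (fun x y => peDl x y z) (pe0l z)). Qed.
Lemma pe_sumr I (r : seq I) (P : pred I) (F : I -> V) z :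
  pe z (\sum_(i <- r | P i) F i) = \sum_(i <- r | P i) pe z (F i).
Proof. by rewrite (big_morph _ (fun x y => peDr x y z) (pe0r z)). Qed.

Lemma prev_one : prev one = 1. Proof. exact: pe_unit. Qed.
Lemma prevD x y : prev (x + y) = prev x + prev y. Proof. exact: peDl. Qed.
Lemma prevB x y : prev (x - y) = prev x - prev y. Proof. exact: peBl. Qed.
Lemma prevZ a x : prev (a *: x) = a * prev x. Proof. exact: peZl. Qed.
Lemma prev_sum I (r : seq I) (P : pred I) (F : I -> V) :
  prev (\sum_(i <- r | P i) F i) = \sum_(i <- r | P i) prev (F i).
Proof. exact: pe_suml. Qed.

Lemma peE x y : pe x y = cov x y + prev x * prev y.
Proof. by rewrite /bl_cov subrK. Qed.

Lemma cov_sym x y : cov x y = cov y x.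
Proof. by rewrite /bl_cov pe_sym mulrC. Qed.

Let cov_linearl z a x y : cov (a *: x + y) z = a * cov x z + cov y z.
Proof. by rewrite /bl_cov prevD prevZ peDl peZl; ring. Qed.
Let cov_linearr z a x y : cov z (a *: x + y) = a * cov z x + cov z y.
Proof. by rewrite cov_sym cov_linearl !(cov_sym z). Qed.

Lemma covDl x y z : cov (x + y) z = cov x z + cov y z. Proof. exact: lfD (cov_linearl z) _ _. Qed.
Lemma covDr x y z : cov z (x + y) = cov z x + cov z y. Proof. exact: lfD (cov_linearr z) _ _. Qed.
Lemma covBl x y z : cov (x - y) z = cov x z - cov y z. Proof. exact: lfB (cov_linearl z) _ _. Qed.
Lemma covZl a x z : cov (a *: x) z = a * cov x z. Proof. exact: lfZ (cov_linearl z) _ _. Qed.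
Lemma covZr a x z : cov z (a *: x) = a * cov z x. Proof. exact: lfZ (cov_linearr z) _ _. Qed.
Lemma cov_suml I (r : seq I) (P : pred I) (F : I -> V) z :
  cov (\sum_(i <- r | P i) F i) z = \sum_(i <- r | P i) cov (F i) z.
Proof. by rewrite (big_morph _ (fun x y => covDl x y z) (lf0 (cov_linearl z))). Qed.
Lemma cov_sumr I (r : seq I) (P : pred I) (F : I -> V) z :
  cov z (\sum_(i <- r | P i) F i) = \sum_(i <- r | P i) cov z (F i).
Proof. by rewrite (big_morph _ (fun x y => covDr x y z) (lf0 (cov_linearr z))). Qed.

Lemma cov_oner x : cov x one = 0.
Proof. by rewrite /bl_cov prev_one mulr1 subrr. Qed.
Lemma cov_onel x : cov one x = 0.
Proof. by rewrite cov_sym cov_oner. Qed.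

Lemma cov_ge0 x : 0 <= cov x x.
Proof.
have -> : cov x x = pe (x - prev x *: one) (x - prev x *: one).
  by rewrite peBl !peBr !peZl !peZr pe_unit /bl_cov /bl_prev (pe_sym B one x); ring.
exact: pe_ge0.
Qed.

(* When Var(w) = 0, Var(y + t w) = Var(y) + 2 t Cov(y, w) is affine in t, and it
   stays nonnegative only if Cov(y, w) = 0. *)
Lemma cov_var0 y w : cov w w = 0 -> cov y w = 0.
Proof.
move=> w0; apply/eqP/negPn/negP => c0.
set t := - (cov y y + 1) / (2 * cov y w).
have : cov (y + t *: w) (y + t *: w) = -1.
  rewrite !covDl !covDr !covZl !covZr w0 (cov_sym w y) /t.
  by field; rewrite c0.
by have := cov_ge0 (y + t *: w); lra.
Qed.

Lemma covmE k l (Y : 'I_k -> V) (W : 'I_l -> V) i j : covm B Y W i j = cov (Y i) (W j).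
Proof. exact: mxE. Qed.

Definition in_span l (W : 'I_l -> V) x :=
  exists c0 (c : 'I_l -> R), x = c0 *: one + \sum_j c j *: W j.

Lemma in_spanW l (W : 'I_l -> V) j : in_span W (W j).
Proof.
exists 0, (fun i => (i == j)%:R); rewrite scale0r add0r (bigD1 j) //= eqxx scale1r.
by rewrite big1 ?addr0 // => i /negbTE ->; rewrite scale0r.
Qed.

Lemma in_spanB l (W : 'I_l -> V) x y : in_span W x -> in_span W y -> in_span W (x - y).
Proof.
move=> [a [c ->]] [b [d ->]]; exists (a - b), (fun j => c j - d j).
under [X in _ = _ + X]eq_bigr do rewrite scalerBl.
by rewrite scalerBl sumrB opprD addrACA.
Qed.

Lemma cov_in_span l (W : 'I_l -> V) y x :
  (forall j, cov y (W j) = 0) -> in_span W x -> cov y x = 0.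
Proof.
move=> yW0 [c0 [c ->]]; rewrite covDr covZr cov_oner mulr0 add0r cov_sumr.
by rewrite big1 // => j _; rewrite covZr yW0 mulr0.
Qed.

Section AdjustedExpectation.
Variables (k l : nat) (W : 'I_l -> V) (Y : 'I_k -> V).
Local Notation C := (covm B Y W).
Local Notation M := (varm B W).
Local Notation adj := (adj_exp B W Y).

(* Each column of 1 - M^+ M gives a combination w of W with Var(w) = 0, which
   is therefore uncorrelated with Y. *)
Lemma covm_mpinv_varm : C *m mpinv M *m M = C.
Proof.
have [MNM _ _ _] := mpinvP M.
set T := 1%:M - mpinv M *m M.
have MT : M *m T = 0 by rewrite mulmxBr mulmx1 mulmxA MNM subrr.
suff CT : C *m T = 0 by move: CT; rewrite mulmxBr mulmx1 mulmxA => /subr0_eq.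
apply/matrixP => i j; rewrite !mxE.
set w := \sum_i0 T i0 j *: W i0.
have covWw i0 : cov (W i0) w = 0.
  have : (M *m T) i0 j = 0 by rewrite MT mxE.
  by rewrite mxE => <-; rewrite cov_sumr; apply: eq_bigr => i1 _; rewrite covZr mulrC covmE.
have ww : cov w w = 0 by rewrite cov_suml big1 // => i0 _; rewrite covZl covWw mulr0.
rewrite -[RHS](cov_var0 (Y i) ww) cov_sumr.
by apply: eq_bigr => i0 _; rewrite covZr mulrC covmE.
Qed.

Lemma prev_adj_exp i : prev (adj i) = prev (Y i).
Proof.
rewrite /adj_exp prevD prevZ prev_one mulr1 prev_sum big1 ?addr0 // => j _.
by rewrite prevZ prevB prevZ prev_one mulr1 subrr mulr0.
Qed.

Lemma cov_adj_exp i j : cov (adj i) (W j) = cov (Y i) (W j).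
Proof.
rewrite /adj_exp covDl covZl cov_onel mulr0 add0r cov_suml.
transitivity ((C *m mpinv M *m M) i j); last by rewrite covm_mpinv_varm mxE.
rewrite [RHS]mxE; apply: eq_bigr => j0 _.
by rewrite covZl covBl covZl cov_onel mulr0 subr0 covmE.
Qed.

Lemma adj_exp_in_span i : in_span W (adj i).
Proof.
exists (prev (Y i) - \sum_j (C *m mpinv M) i j * prev (W j)), (fun j => (C *m mpinv M) i j).
rewrite /adj_exp scalerBl -addrA; congr (_ + _).
under eq_bigr do rewrite scalerBr scalerA.
by rewrite sumrB scaler_suml addrC.
Qed.

Lemma adj_exp_resid_orth i x : in_span W x -> pe (Y i - adj i) x = 0.
Proof.
have resid1 : pe (Y i - adj i) one = 0 by rewrite -/(prev _) prevB prev_adj_exp subrr.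
have residW j : pe (Y i - adj i) (W j) = 0.
  by rewrite peE covBl cov_adj_exp subrr prevB prev_adj_exp subrr mul0r addr0.
move=> [c0 [c ->]]; rewrite peDr peZr resid1 mulr0 add0r pe_sumr big1 // => j _.
by rewrite peZr residW mulr0.
Qed.

Lemma adj_exp_min i x : in_span W x -> pe (Y i - adj i) (Y i - adj i) <= pe (Y i - x) (Y i - x).
Proof.
move=> Wx; have Wd : in_span W (adj i - x) by apply: in_spanB => //; exact: adj_exp_in_span.
have resid_d := adj_exp_resid_orth i Wd.
have -> : Y i - x = (Y i - adj i) + (adj i - x) by rewrite addrA subrK.
rewrite (peDl (Y i - adj i)) !(peDr (Y i - adj i)) resid_d (pe_sym B (adj i - x)) resid_d.
by rewrite addr0 add0r lerDl pe_ge0.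
Qed.

End AdjustedExpectation.

Lemma adj_exp_affine k l p (W : 'I_l -> V) (Y : 'I_k -> V) (U X : 'I_p -> V) (A : 'M[R]_(p, k)) :
  (forall a j, cov (U a) (W j) = 0) ->
  (forall a, X a = \sum_i A a i *: Y i + U a) ->
  forall a, adj_exp B W X a = \sum_i A a i *: adj_exp B W Y i + prev (U a) *: one.
Proof.
move=> UW0 defX a.
have covXW : covm B X W = A *m covm B Y W.
  apply/matrixP => i j; rewrite !mxE defX covDl UW0 addr0 cov_suml.
  by apply: eq_bigr => i0 _; rewrite covZl covmE.
rewrite /adj_exp covXW -mulmxA defX prevD prev_sum.
rewrite scalerDl -addrA [prev (U a) *: one + _]addrC addrA; congr (_ + _).
under [in RHS]eq_bigr do rewrite scalerDr.
rewrite big_split /=; congr (_ + _).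
  by rewrite scaler_suml; apply: eq_bigr => i _; rewrite prevZ scalerA.
under eq_bigr do rewrite mxE scaler_suml.
rewrite exchange_big /=; apply: eq_bigr => i _; rewrite scaler_sumr.
by apply: eq_bigr => j _; rewrite scalerA.
Qed.

Lemma pe_sum_le n (f : 'I_n -> V) :
  pe (\sum_i f i) (\sum_i f i) <= n%:R * \sum_i pe (f i) (f i).
Proof.
have pe2_le x y : 2 * pe x y <= pe x x + pe y y.
  by have := pe_ge0 B (x - y); rewrite peBl !peBr (pe_sym B y x); lra.
rewrite -(ler_pM2l (_ : 0 < 2)) // pe_suml mulr_sumr.
apply: (@le_trans _ _ (\sum_i \sum_j (pe (f i) (f i) + pe (f j) (f j)))).
  apply: ler_sum => i _; rewrite pe_sumr mulr_sumr.
  by apply: ler_sum => j _; exact: pe2_le.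
rewrite (eq_bigr (fun i => n%:R * pe (f i) (f i) + \sum_j pe (f j) (f j))); last first.
  by move=> i _; rewrite big_split /= sumr_const card_ord mulr_natl.
by rewrite big_split /= -mulr_sumr sumr_const card_ord -mulr_natl; lra.
Qed.

Lemma pe_mean n (f : 'I_n -> V) s : (0 < n)%N ->
  (forall i j, pe (f i) (f j) = if i == j then s else 0) ->
  pe (n%:R^-1 *: \sum_i f i) (n%:R^-1 *: \sum_i f i) = s / n%:R.
Proof.
move=> n_gt0 pe_f; have n_neq0 : n%:R != 0 :> R by rewrite pnatr_eq0 -lt0n.
have row_sum i : pe (f i) (\sum_j f j) = s.
  rewrite pe_sumr (bigD1 i) //= pe_f eqxx big1 ?addr0 // => j ne_ji.
  by rewrite pe_f eq_sym (negbTE ne_ji).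
rewrite peZl peZr pe_suml (eq_bigr (fun=> s)) // sumr_const card_ord -mulr_natl.
by field.
Qed.

End BeliefCalculus.

Section GroupMeans.
Variables (R : realType) (V : lmodType R) (B : belief V).
Variables (m D p : nat) (g : 'I_D -> 'I_m) (mu : 'I_D -> V) (Res : nat -> 'I_D -> V).
Variables (A : 'M[R]_(p, D)) (U X : 'I_p -> V).
Hypothesis prev_Res : forall j k, bl_prev B (Res j k) = 0.
Hypothesis cov_Res : forall j j' k k', (j, g k) != (j', g k') ->
  bl_cov B (Res j k) (Res j' k') = 0.
Hypothesis var_Res : forall j k k', g k = g k' ->
  bl_cov B (Res j k) (Res j k') = bl_cov B (Res 0 k) (Res 0 k').
Hypothesis cov_U_mu : forall a k, bl_cov B (U a) (mu k) = 0.
Hypothesis cov_U_Res : forall a j k, bl_cov B (U a) (Res j k) = 0.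
Hypothesis defX : forall a, X a = \sum_(k < D) A a k *: mu k + U a.

Local Notation S k := (bl_cov B (Res 0 k) (Res 0 k)).

Definition mse_const := D%:R * \sum_(a < p) \sum_(k < D) A a k ^+ 2 * S k.

Variables (n : 'I_m -> nat) (N : nat).
Hypothesis N_gt0 : (0 < N)%N.
Hypothesis n_ge : forall i, (N <= n i)%N.

Definition group_mean k := (n (g k))%:R^-1 *: \sum_(j < n (g k)) (mu k + Res j k).

Local Notation calZ := (adj_exp B group_mean mu).

Lemma mse_group_mean k :
  pe B (mu k - group_mean k) (mu k - group_mean k) = S k / (n (g k))%:R.
Proof.
have n_gt0 : (0 < n (g k))%N := leq_trans N_gt0 (n_ge (g k)).
have -> : mu k - group_mean k = - ((n (g k))%:R^-1 *: \sum_(j < n (g k)) Res j k).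
  rewrite /group_mean big_split /= sumr_const card_ord scalerDr -scaler_nat scalerA.
  by rewrite mulVf ?pnatr_eq0 -?lt0n // scale1r opprD addrA subrr add0r.
rewrite peNl peNr opprK; apply: pe_mean => // j j'.
rewrite peE !prev_Res mulr0 addr0; case: eqVneq => [<-|ne_jj']; first exact: var_Res.
by apply: cov_Res; rewrite xpair_eqE eqxx andbT.
Qed.

Lemma mse_adj_exp_mu k :
  pe B (mu k - adj_exp B calZ mu k) (mu k - adj_exp B calZ mu k) <= S k / N%:R.
Proof.
apply: le_trans (adj_exp_min mu k (in_spanW B calZ k)) _.
apply: le_trans (adj_exp_min mu k (in_spanW B group_mean k)) _.
rewrite mse_group_mean ler_wpM2l ?cov_ge0 // lef_pV2 ?posrE ?ltr0n ?ler_nat //.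
exact: leq_trans N_gt0 (n_ge (g k)).
Qed.

Lemma cov_U_adj_exp a k : bl_cov B (U a) (calZ k) = 0.
Proof.
apply: cov_in_span (adj_exp_in_span B group_mean mu k) => k'.
rewrite /group_mean covZr cov_sumr big1 ?mulr0 // => j _.
by rewrite covDr cov_U_mu cov_U_Res addr0.
Qed.

Lemma adj_exp_X_err a :
  adj_exp B calZ X a - (\sum_k A a k *: mu k + bl_prev B (U a) *: bl_one B)
  = \sum_k A a k *: (adj_exp B calZ mu k - mu k).
Proof.
rewrite (adj_exp_affine cov_U_adj_exp defX) opprD addrACA subrr addr0 -sumrB.
by apply: eq_bigr => k _; rewrite scalerBr.
Qed.

Lemma mse_adj_exp_X :
  \sum_a pe B (adj_exp B calZ X a - (\sum_k A a k *: mu k + bl_prev B (U a) *: bl_one B))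
              (adj_exp B calZ X a - (\sum_k A a k *: mu k + bl_prev B (U a) *: bl_one B))
  <= mse_const / N%:R.
Proof.
rewrite /mse_const -mulrA mulr_suml mulr_sumr; apply: ler_sum => a _.
rewrite adj_exp_X_err; apply: le_trans (pe_sum_le B _) _.
rewrite ler_wpM2l // mulr_suml; apply: ler_sum => k _.
rewrite peZl peZr mulrA -expr2 -mulrA ler_wpM2l ?sqr_ge0 //.
by rewrite -opprB peNl peNr opprK; exact: mse_adj_exp_mu.
Qed.

End GroupMeans.

(* Components of the stacked vector mu = vec(mu_1,...,mu_m) are indexed by
   'I_D; component k belongs to group g k.  Res j k is component k of the
   residual R_{g k, j} (j-th residual of group g k, j = 0,1,2,...). *)
Theorem lemma3p2 (R : realType) (V : lmodType R) (B : belief V)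
  (m D p : nat) (g : 'I_D -> 'I_m)
  (mu : 'I_D -> V) (Res : nat -> 'I_D -> V)
  (A : 'M[R]_(p, D)) (U X : 'I_p -> V) :
  (forall j k, bl_prev B (Res j k) = 0) ->
  (forall j k k', bl_cov B (Res j k) (mu k') = 0) ->
  (forall j j' k k', (j, g k) != (j', g k') -> bl_cov B (Res j k) (Res j' k') = 0) ->
  (forall j k k', g k = g k' -> bl_cov B (Res j k) (Res j k') = bl_cov B (Res 0 k) (Res 0 k')) ->
  (forall a k, bl_cov B (U a) (mu k) = 0) ->
  (forall a j k, bl_cov B (U a) (Res j k) = 0) ->
  (forall a, X a = \sum_(k < D) A a k *: mu k + U a) ->
  forall eps : R, 0 < eps -> exists N : nat, forall n : 'I_m -> nat,
    (forall i, (N <= n i)%N) ->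
    let Z := fun (j : nat) (k : 'I_D) => mu k + Res j k in
    let Zbar := fun k => (n (g k))%:R^-1 *: \sum_(j < n (g k)) Z j k in
    let calZ := adj_exp B Zbar mu in
    bl_norm B (fun a => adj_exp B calZ X a
                        - (\sum_(k < D) A a k *: mu k + bl_prev B (U a) *: bl_one B)) < eps.
Proof.
(* The residuals need not be uncorrelated with mu: mu k - Zbar k is an average
   of residuals only. *)
move=> prev_Res _ cov_Res var_Res cov_U_mu cov_U_Res defX eps eps_gt0.
exists (Num.trunc (mse_const B Res A / eps ^+ 2)).+1 => n n_ge /=.
have mse_le := mse_adj_exp_X prev_Res cov_Res var_Res cov_U_mu cov_U_Res defX (ltn0Sn _) n_ge.
rewrite /bl_norm -(gtr0_norm eps_gt0) -sqrtr_sqr ltr_sqrt ?exprn_gt0 //.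
apply: le_lt_trans mse_le _.
by rewrite ltr_pdivrMr ?ltr0n // mulrC -ltr_pdivrMr ?exprn_gt0 // truncnS_gt.
Qed.
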